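(* Let $(\mathsf P,\mathcal O)$ be a semitopology, let $\mathsf{Val}$ be a set with at least two elements equipped with the discrete semitopology, and let $T\subseteq\mathsf P$ be any set. Suppose that for every $p,p'\in T$ and every function $f:\mathsf P\to\mathsf{Val}$, if $f$ is continuous at $p$ and at $p'$ then $f(p)=f(p')$. Then $T$ is transitive.
   Context: A semitopology is a pair $(\mathsf P,\mathcal O)$ where $\mathsf P$ is a set and $\mathcal O\subseteq\mathcal P(\mathsf P)$ contains $\varnothing$ and $\mathsf P$ and is closed under arbitrary unions; elements of $\mathcal O$ are open sets. Write $X\between Y$ when $X\cap Y\neq\varnothing$. A set $T\subseteq\mathsf P$ is transitive when for all $O,O'\in\mathcal O$, $O\between T$ and $T\between O'$ imply $O\between O'$. A function $f:\mathsf P\to\mathsf{Val}$ is continuous at $p$ when for every open $V\ni f(p)$ there is an open $O$ with $p\in O\subseteq f^{-1}(V)$. *)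

Set Implicit Arguments.

Record semitopology (P : Type) := {
  is_open : (P -> Prop) -> Prop;
  open_empty : is_open (fun _ => False);
  open_full : is_open (fun _ => True);
  open_union : forall (I : Type) (F : I -> P -> Prop),
      (forall i, is_open (F i)) -> is_open (fun x => exists i, F i x)
}.

Definition meets {P : Type} (X Y : P -> Prop) : Prop := exists x, X x /\ Y x.

Definition transitive_set {P : Type} (S : semitopology P) (T : P -> Prop) : Prop :=
  forall O O' : P -> Prop, is_open S O -> is_open S O' ->
    meets O T -> meets T O' -> meets O O'.

Definition discrete_semitopology (V : Type) : semitopology V.
Proof.
  refine {| is_open := fun _ => True |}; auto.
Defined.

Definition continuous_at {P V : Type} (SP : semitopology P) (SV : semitopology V)
  (f : P -> V) (p : P) : Prop :=
  forall W : V -> Prop, is_open SV W -> W (f p) ->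
    exists O : P -> Prop, is_open SP O /\ O p /\ (forall x, O x -> W (f x)).

(* Let O, O' be open sets with O meeting T at p
   and O' meeting T at p'.  If O and O' were disjoint, the two-valued function
   f sending O to v1 and everything else to v2 would be constant on the open
   neighbourhood O of p and on the open neighbourhood O' of p'.  A function
   that is locally constant at a point is continuous there, whatever the
   topology on the codomain; hence f is continuous at p and p', and the
   hypothesis forces v1 = f p = f p' = v2, a contradiction.  So O meets O'. *)

From Stdlib Require Import Classical ClassicalEpsilon.

Lemma continuous_at_of_locally_constant {P V : Type} (SP : semitopology P)
  (SV : semitopology V) {f : P -> V} {p : P} {O : P -> Prop} :
  is_open SP O -> O p -> (forall x, O x -> f x = f p) ->
  continuous_at SP SV f p.
Proof.
  intros HO Op Hconst W _ HW.
  exists O; split; [exact HO | split; [exact Op |]].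
  intros x Ox; rewrite (Hconst x Ox); exact HW.
Qed.

Definition two_valued {P V : Type} (X : P -> Prop) (v1 v2 : V) : P -> V :=
  fun x => if excluded_middle_informative (X x) then v1 else v2.

Lemma two_valued_in {P V : Type} (X : P -> Prop) (v1 v2 : V) {x : P} :
  X x -> two_valued X v1 v2 x = v1.
Proof.
  intros Xx; unfold two_valued.
  destruct (excluded_middle_informative (X x)); tauto.
Qed.

Lemma two_valued_out {P V : Type} (X : P -> Prop) (v1 v2 : V) {x : P} :
  ~ X x -> two_valued X v1 v2 x = v2.
Proof.
  intros nXx; unfold two_valued.
  destruct (excluded_middle_informative (X x)); tauto.
Qed.

Theorem proposition3p7 (P : Type) (S : semitopology P) (Val : Type)
  (v1 v2 : Val) (hv : v1 <> v2) (T : P -> Prop) :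
  (forall (p p' : P) (f : P -> Val), T p -> T p' ->
     continuous_at S (discrete_semitopology Val) f p ->
     continuous_at S (discrete_semitopology Val) f p' ->
     f p = f p') ->
  transitive_set S T.
Proof.
  intros Hagree O O' HO HO' [p [Op Tp]] [p' [Tp' O'p']].
  apply NNPP; intro Hdisj.
  assert (notO : forall x, O' x -> ~ O x)
    by (intros x O'x Ox; apply Hdisj; exists x; auto).
  set (f := two_valued O v1 v2).
  assert (fp : f p = v1) by exact (two_valued_in O v1 v2 Op).
  assert (fp' : f p' = v2) by exact (two_valued_out O v1 v2 (notO p' O'p')).
  assert (fO : forall x, O x -> f x = f p)
    by (intros x Ox; rewrite fp; exact (two_valued_in O v1 v2 Ox)).
  assert (fO' : forall x, O' x -> f x = f p')
    by (intros x O'x; rewrite fp'; exact (two_valued_out O v1 v2 (notO x O'x))).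
  apply hv; rewrite <- fp, <- fp'.
  apply Hagree; [exact Tp | exact Tp' | |].
  - exact (continuous_at_of_locally_constant S _ HO Op fO).
  - exact (continuous_at_of_locally_constant S _ HO' O'p' fO').
Qed.
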